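(* Let $f, g: A \to B$ be maps of $\mathbf{PR}$. If $\mathbf{PR}$ derives the equation $\mathrm{true}_A = \;\doteq_B \circ (f \times g)\circ \Delta_A : A \to \mathbb{N}$ (in free variables: $[f(a) \doteq_B g(a)] = \mathrm{true}_A$), then $\mathbf{PR}$ derives $f = g: A \to B$.
   Context: $\mathbf{PR}$ is the formal (syntactic) category defined as follows. Objects: generated from a terminal object $\mathbb{1}$ and a natural numbers object $\mathbb{N}$ by binary products $A \times B$. Maps: generated from the constants $0: \mathbb{1} \to \mathbb{N}$, $\mathrm{s}: \mathbb{N}\to\mathbb{N}$, identities, terminal maps $\Pi_A: A \to \mathbb{1}$, projections $\ell, \mathrm{r}$, by composition, induced maps $(f,g)$ and iteration $f \mapsto f^\S: A\times\mathbb{N}\to A$ of endomaps; map equality is the least congruence containing the category axioms, uniqueness of maps into $\mathbb{1}$, $\ell\circ(f,g)=f$, $\mathrm{r}\circ(f,g)=g$, $(\ell h,\mathrm{r} h)=h$, the iteration equations $f^\S(a,0)=a$, $f^\S(a,\mathrm{s}n)=f(f^\S(a,n))$, and Freyd's uniqueness rule for initialised iterates ($h(a,0)=f(a)$, $h(a,\mathrm{s}n)=g(h(a,n))$ imply $h = g^\S\circ(f\times\mathbb{N})$). $f\times g := (f\ell, g\mathrm{r})$, $\Delta_A := (\mathrm{id}_A,\mathrm{id}_A)$. Arithmetic on $\mathbb{N}$ (all defined in $\mathbf{PR}$ by iteration/primitive recursion): $\mathrm{true}=1=\mathrm{s}\circ 0$, $\mathrm{false}=0$, $\mathrm{true}_A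 = 1 \circ \Pi_A$; predecessor with $\mathrm{pred}(0)=0$, $\mathrm{pred}(\mathrm{s}n)=n$; truncated subtraction $a \dot- 0 = a$, $a \dot- \mathrm{s}n = \mathrm{pred}(a\dot- n)$; multiplication; $\neg 0 = 1$, $\neg \mathrm{s}n = 0$; $\mathrm{sign} = \neg\neg$; $x \wedge y = \mathrm{sign}(x\cdot y)$; $[m\le n] = \neg(m\dot- n)$; $[m \doteq n] = [m\le n]\wedge[n\le m]$. Equality predicates $\doteq_B: B\times B\to\mathbb{N}$ on other objects: $\doteq_{\mathbb{1}} = \mathrm{true}$, and componentwise on products: $[(a,b)\doteq_{A\times B}(a',b')] = [a\doteq_A a']\wedge[b\doteq_B b']$. *)

Inductive Obj : Type :=
| One : Obj
| Nat : Obj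
| Prod : Obj -> Obj -> Obj.

Inductive Map : Obj -> Obj -> Type :=
| mid   : forall A, Map A A
| mcomp : forall {A B C}, Map B C -> Map A B -> Map A C
| mbang : forall A, Map A One
| mzero : Map One Nat
| msucc : Map Nat Nat
| ml    : forall A B, Map (Prod A B) A
| mr    : forall A B, Map (Prod A B) B
| mpair : forall {C A B}, Map C A -> Map C B -> Map C (Prod A B)
| miter : forall {A}, Map A A -> Map (Prod A Nat) A.

Definition mtimes {A B C D} (f : Map A C) (g : Map B D) : Map (Prod A B) (Prod C D) :=
  mpair (mcomp f (ml A B)) (mcomp g (mr A B)).

Definition mdiag (A : Obj) : Map A (Prod A A) := mpair (mid A) (mid A).

(** "x(a,0)" : precomposition with (id_A, 0 o Pi_A) *)
Definition at0 (A : Obj) : Map A (Prod A Nat) := mpair (mid A) (mcomp mzero (mbang A)).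
(** "x(a, s n)" : precomposition with (l, s o r) *)
Definition atS (A : Obj) : Map (Prod A Nat) (Prod A Nat) :=
  mpair (ml A Nat) (mcomp msucc (mr A Nat)).

Inductive PREq : forall {A B : Obj}, Map A B -> Map A B -> Prop :=
| eq_refl  : forall A B (f : Map A B), PREq f f
| eq_sym   : forall A B (f g : Map A B), PREq f g -> PREq g f
| eq_trans : forall A B (f g h : Map A B), PREq f g -> PREq g h -> PREq f h
| eq_comp  : forall A B C (f f' : Map B C) (g g' : Map A B),
    PREq f f' -> PREq g g' -> PREq (mcomp f g) (mcomp f' g')
| eq_pair  : forall C A B (f f' : Map C A) (g g' : Map C B),
    PREq f f' -> PREq g g' -> PREq (mpair f g) (mpair f' g')
| eq_iter  : forall A (f f' : Map A A), PREq f f' -> PREq (miter f) (miter f')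
| eq_idl   : forall A B (f : Map A B), PREq (mcomp (mid B) f) f
| eq_idr   : forall A B (f : Map A B), PREq (mcomp f (mid A)) f
| eq_assoc : forall A B C D (f : Map C D) (g : Map B C) (h : Map A B),
    PREq (mcomp f (mcomp g h)) (mcomp (mcomp f g) h)
| eq_term  : forall A (f : Map A One), PREq f (mbang A)
| eq_projl : forall C A B (f : Map C A) (g : Map C B), PREq (mcomp (ml A B) (mpair f g)) f
| eq_projr : forall C A B (f : Map C A) (g : Map C B), PREq (mcomp (mr A B) (mpair f g)) g
| eq_surj  : forall C A B (h : Map C (Prod A B)),
    PREq (mpair (mcomp (ml A B) h) (mcomp (mr A B) h)) h
| eq_iter0 : forall A (f : Map A A), PREq (mcomp (miter f) (at0 A)) (mid A)
| eq_iterS : forall A (f : Map A A),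
    PREq (mcomp (miter f) (atS A)) (mcomp f (miter f))
| eq_freyd : forall A B (f : Map A B) (g : Map B B) (h : Map (Prod A Nat) B),
    PREq (mcomp h (at0 A)) f ->
    PREq (mcomp h (atS A)) (mcomp g h) ->
    PREq h (mcomp (miter g) (mtimes f (mid Nat))).

Definition one : Map One Nat := mcomp msucc mzero.
Definition mtrue : Map One Nat := one.
Definition mfalse : Map One Nat := mzero.
Definition true_ (A : Obj) : Map A Nat := mcomp mtrue (mbang A).

(** pred n = l (F^S((0,0), n)) with F(x,y) = (y, s y) *)
Definition pred_step : Map (Prod Nat Nat) (Prod Nat Nat) :=
  mpair (mr Nat Nat) (mcomp msucc (mr Nat Nat)).
Definition mpred : Map Nat Nat :=
  mcomp (ml Nat Nat)
    (mcomp (miter pred_step)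
       (mpair (mcomp (mpair mzero mzero) (mbang Nat)) (mid Nat))).

(** truncated subtraction: a -' 0 = a, a -' s n = pred (a -' n) *)
Definition msub : Map (Prod Nat Nat) Nat := miter mpred.

Definition madd : Map (Prod Nat Nat) Nat := miter msucc.

(** multiplication: x * n = r (F^S((x,0), n)) with F(x,acc) = (x, acc + x) *)
Definition mul_step : Map (Prod Nat Nat) (Prod Nat Nat) :=
  mpair (ml Nat Nat) (mcomp madd (mpair (mr Nat Nat) (ml Nat Nat))).
Definition mmul : Map (Prod Nat Nat) Nat :=
  mcomp (mr Nat Nat)
    (mcomp (miter mul_step)
       (mpair (mpair (ml Nat Nat) (mcomp mzero (mbang (Prod Nat Nat)))) (mr Nat Nat))).

(** negation: not 0 = 1, not (s n) = 0; via k(a,0)=a, k(a,s n)=0 *)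
Definition mnot : Map Nat Nat :=
  mcomp (miter (mcomp mzero (mbang Nat))) (mpair (mcomp one (mbang Nat)) (mid Nat)).
Definition msign : Map Nat Nat := mcomp mnot mnot.
Definition mand : Map (Prod Nat Nat) Nat := mcomp msign mmul.
Definition mleq : Map (Prod Nat Nat) Nat := mcomp mnot msub.
Definition mswap (A B : Obj) : Map (Prod A B) (Prod B A) := mpair (mr A B) (ml A B).
Definition meqN : Map (Prod Nat Nat) Nat :=
  mcomp mand (mpair mleq (mcomp mleq (mswap Nat Nat))).

Fixpoint meq (B : Obj) : Map (Prod B B) Nat :=
  match B as B0 return Map (Prod B0 B0) Nat with
  | One => true_ (Prod One One)
  | Nat => meqN
  | Prod A C =>
      mcomp mand
        (mpair
          (mcomp (meq A) (mpair (mcomp (ml A C) (ml (Prod A C) (Prod A C)))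
                                (mcomp (ml A C) (mr (Prod A C) (Prod A C)))))
          (mcomp (meq C) (mpair (mcomp (mr A C) (ml (Prod A C) (Prod A C)))
                                (mcomp (mr A C) (mr (Prod A C) (Prod A C))))))
  end.

(** The proof is by
    induction on the object B.  For B = 1 every two maps are equal.  For a product,
    [≐] is a conjunction of truth values, so both conjuncts are true and the claim
    follows componentwise by surjective pairing.  The heart is B = N: from
    [¬(u ∸ v) ∧ ¬(v ∸ u)] we get u ∸ v = 0 = v ∸ u, and then u = v because of the
    identity (x ∸ y) + y = (y ∸ x) + x.  That identity has a genuinely two-variable
    proof: the double induction principle (two maps N × N → B that agree on both axes
    and satisfy the same diagonal recursion are equal), derived here from Freyd's
    uniqueness rule by walking a "staircase" up the diagonal. *)

From Stdlib Require Import Setoid Morphisms.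

Infix "≈" := PREq (at level 70).
Notation "f ∘ g" := (mcomp f g) (at level 41, right associativity).
Notation "⟨ f , g ⟩" := (mpair f g).
Notation "a ∸ b" := (msub ∘ ⟨a, b⟩) (at level 42, left associativity).
Notation zeroc C := (mzero ∘ mbang C).
Notation onec C := (msucc ∘ mzero ∘ mbang C).

#[global] Instance PREq_equiv A B : Equivalence (@PREq A B).
Proof. split; [intro; apply eq_refl | intros ??; apply eq_sym | intros ???; apply eq_trans]. Qed.
#[global] Instance mcomp_proper A B C : Proper (PREq ==> PREq ==> PREq) (@mcomp A B C).
Proof. intros ?? Hf ?? Hg; apply eq_comp; assumption. Qed.
#[global] Instance mpair_proper C A B : Proper (PREq ==> PREq ==> PREq) (@mpair C A B).
Proof. intros ?? Hf ?? Hg; apply eq_pair; assumption. Qed.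
#[global] Instance miter_proper A : Proper (PREq ==> PREq) (@miter A).
Proof. intros ?? Hf; apply eq_iter; assumption. Qed.
#[global] Instance mtimes_proper A B C D : Proper (PREq ==> PREq ==> PREq) (@mtimes A B C D).
Proof. intros ?? Hf ?? Hg; unfold mtimes; rewrite Hf, Hg; reflexivity. Qed.

Lemma comp_assoc A B C D (f : Map C D) (g : Map B C) (h : Map A B) : (f ∘ g) ∘ h ≈ f ∘ (g ∘ h).
Proof. symmetry; apply eq_assoc. Qed.

Lemma pair_comp D C A B (f : Map C A) (g : Map C B) (h : Map D C) : ⟨f, g⟩ ∘ h ≈ ⟨f ∘ h, g ∘ h⟩.
Proof.
  rewrite <- (eq_surj _ _ _ (⟨f, g⟩ ∘ h)), <- !comp_assoc, eq_projl, eq_projr.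
  reflexivity.
Qed.

Lemma bang_comp A B (h : Map A B) : mbang B ∘ h ≈ mbang A.
Proof. apply eq_term. Qed.

Lemma pair_proj A B : ⟨ml A B, mr A B⟩ ≈ mid (Prod A B).
Proof. rewrite <- (eq_surj _ _ _ (mid _)), !eq_idr. reflexivity. Qed.

Lemma pair_proj3 A B C :
  mid (Prod (Prod A B) C) ≈ ⟨⟨ml A B ∘ ml (Prod A B) C, mr A B ∘ ml (Prod A B) C⟩, mr (Prod A B) C⟩.
Proof. rewrite <- pair_comp, pair_proj, eq_idl, pair_proj. reflexivity. Qed.

Lemma iter_zero C A (f : Map A A) (t : Map C A) (e : Map C One) : miter f ∘ ⟨t, mzero ∘ e⟩ ≈ t.
Proof.
  transitivity (miter f ∘ at0 A ∘ t).
  - unfold at0. rewrite pair_comp, eq_idl, comp_assoc, (eq_term _ (mbang A ∘ t)), (eq_term _ e).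
    reflexivity.
  - rewrite <- comp_assoc, eq_iter0, eq_idl. reflexivity.
Qed.

Lemma iter_succ C A (f : Map A A) (t : Map C A) (n : Map C Nat) :
  miter f ∘ ⟨t, msucc ∘ n⟩ ≈ f ∘ miter f ∘ ⟨t, n⟩.
Proof.
  transitivity (miter f ∘ atS A ∘ ⟨t, n⟩).
  - unfold atS. rewrite pair_comp, eq_projl, comp_assoc, eq_projr. reflexivity.
  - rewrite <- comp_assoc, eq_iterS, comp_assoc. reflexivity.
Qed.

(* [simp_pr] normalizes terms written with generalized elements: it expands the
   abbreviations that are plain composites, associates compositions to the
   right, pushes precompositions into pairs, and evaluates with the computation rules
   collected in the rewrite base [pr] (which grows as the development proceeds). *)
#[global] Hint Rewrite comp_assoc pair_comp eq_projl eq_projr eq_idl eq_idr bang_comp pair_proj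
  iter_zero iter_succ : pr.
Ltac simp_pr := unfold true_, mtrue, one, mswap, mtimes, mdiag, at0, atS in *; autorewrite with pr.
Ltac simp_pr_in H := unfold true_, mtrue, one, mswap, mtimes, mdiag, at0, atS in H;
  autorewrite with pr in H.

(* An equation proved for the generic element may be specialized to any element [q]:
   [plug H q] adds [H ∘ q], normalized, as a new hypothesis. *)
Ltac plug H q := let H' := fresh "Hq" in
  pose proof (eq_comp _ _ _ _ _ _ _ H (eq_refl _ _ q)) as H'; simp_pr_in H'.

(** * Induction from Freyd's uniqueness rule *)

(* Two maps on [G × N] with the same value at 0 that satisfy the same recursion
   h(c, s n) = S((c, n), h(c, n)) are equal: the pairs (id, h) and (id, k) are both
   initialised iterates of the same endomap, so Freyd's rule identifies them. *)
Lemma nat_ind_eq G B (h k : Map (Prod G Nat) B) (S : Map (Prod (Prod G Nat) B) B) :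
  h ∘ at0 G ≈ k ∘ at0 G ->
  h ∘ atS G ≈ S ∘ ⟨mid _, h⟩ ->
  k ∘ atS G ≈ S ∘ ⟨mid _, k⟩ -> h ≈ k.
Proof.
  intros H0 Hh Hk.
  set (T := ⟨atS G ∘ ml _ _, S⟩).
  assert (as_iterate : forall x : Map (Prod G Nat) B, x ∘ atS G ≈ S ∘ ⟨mid _, x⟩ ->
            ⟨mid _, x⟩ ≈ miter T ∘ mtimes (⟨mid _, x⟩ ∘ at0 G) (mid Nat)).
  { intros x Hx. apply eq_freyd; [reflexivity |].
    unfold T. rewrite !pair_comp, eq_idl, comp_assoc, eq_projl, eq_idr, <- Hx. reflexivity. }
  rewrite <- (eq_projr _ _ _ (mid _) h), <- (eq_projr _ _ _ (mid _) k).
  rewrite (as_iterate h Hh), (as_iterate k Hk), !pair_comp, H0. reflexivity.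
Qed.

Lemma case_split K B (L R : Map K B) (U : Map K Nat) (φL φR : Map (Prod K Nat) B) :
  L ≈ φL ∘ ⟨mid K, U⟩ -> R ≈ φR ∘ ⟨mid K, U⟩ ->
  φL ∘ at0 K ≈ φR ∘ at0 K -> φL ∘ atS K ≈ φR ∘ atS K -> L ≈ R.
Proof.
  intros HL HR H0 HS. rewrite HL, HR.
  enough (E : φL ≈ φR) by (rewrite E; reflexivity).
  apply (nat_ind_eq _ _ φL φR ((φL ∘ atS K) ∘ ml _ _)); [exact H0 | |];
    rewrite comp_assoc, eq_projl, eq_idr; [reflexivity | symmetry; exact HS].
Qed.

(** * Primitive recursion and definition by cases *)

(* rec z S (c, n) is the value at n of the recursion with start z(c) and step S;
   it is the second component of an iterate that also carries (c, n). *)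
Definition rec_state {G B} (z : Map G B) (S : Map (Prod (Prod G Nat) B) B)
  : Map (Prod G Nat) (Prod (Prod G Nat) B) :=
  miter ⟨atS G ∘ ml (Prod G Nat) B, S⟩ ∘ mtimes ⟨⟨mid G, zeroc G⟩, z⟩ (mid Nat).
Definition rec {G B} (z : Map G B) S : Map (Prod G Nat) B := mr _ _ ∘ rec_state z S.

#[global] Instance rec_proper G B : Proper (PREq ==> PREq ==> PREq) (@rec G B).
Proof. intros ?? Hz ?? HS. unfold rec, rec_state. rewrite Hz, HS. reflexivity. Qed.

Lemma rec_state_counter G B (z : Map G B) S : ml _ _ ∘ rec_state z S ≈ mid _.
Proof.
  transitivity (miter (atS G) ∘ mtimes (at0 G) (mid Nat)).
  - apply eq_freyd; unfold rec_state; simp_pr; reflexivity.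
  - symmetry. apply eq_freyd; simp_pr; reflexivity.
Qed.

Lemma rec_state_at G B (z : Map G B) S C (c : Map C G) (t : Map C Nat) :
  rec_state z S ∘ ⟨c, t⟩ ≈ ⟨⟨c, t⟩, rec z S ∘ ⟨c, t⟩⟩.
Proof.
  rewrite <- (eq_surj _ _ _ (rec_state z S)) at 1.
  rewrite rec_state_counter. unfold rec. simp_pr. reflexivity.
Qed.

Lemma rec_zero G B (z : Map G B) S C (c : Map C G) (e : Map C One) :
  rec z S ∘ ⟨c, mzero ∘ e⟩ ≈ z ∘ c.
Proof. unfold rec, rec_state. simp_pr. reflexivity. Qed.

Lemma rec_succ G B (z : Map G B) S C (c : Map C G) (t : Map C Nat) :
  rec z S ∘ ⟨c, msucc ∘ t⟩ ≈ S ∘ ⟨⟨c, t⟩, rec z S ∘ ⟨c, t⟩⟩.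
Proof.
  transitivity (mr _ _ ∘ ⟨atS G ∘ ml (Prod G Nat) B, S⟩ ∘ rec_state z S ∘ ⟨c, t⟩).
  - unfold rec, rec_state. simp_pr. reflexivity.
  - rewrite rec_state_at. simp_pr. reflexivity.
Qed.

Definition caseN {G B} (z : Map G B) (w : Map (Prod G Nat) B) := rec z (w ∘ ml _ _).

#[global] Instance caseN_proper G B : Proper (PREq ==> PREq ==> PREq) (@caseN G B).
Proof. intros ?? Hz ?? Hw. unfold caseN. rewrite Hz, Hw. reflexivity. Qed.

Lemma case_zero G B (z : Map G B) w C (c : Map C G) (e : Map C One) :
  caseN z w ∘ ⟨c, mzero ∘ e⟩ ≈ z ∘ c.
Proof. apply rec_zero. Qed.

Lemma case_succ G B (z : Map G B) w C (c : Map C G) (t : Map C Nat) :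
  caseN z w ∘ ⟨c, msucc ∘ t⟩ ≈ w ∘ ⟨c, t⟩.
Proof. unfold caseN. rewrite rec_succ. simp_pr. reflexivity. Qed.
#[global] Hint Rewrite case_zero case_succ : pr.

Lemma pred_zero C : mpred ∘ zeroc C ≈ zeroc C.
Proof. unfold mpred. simp_pr. reflexivity. Qed.

(* pred is the first component of the iterate of (u, v) ↦ (v, s v) from (0, 0),
   whose second component counts the steps. *)
Lemma pred_succ C (t : Map C Nat) : mpred ∘ msucc ∘ t ≈ t.
Proof.
  assert (counter : mr Nat Nat ∘ miter pred_step ∘ ⟨⟨zeroc (Prod One Nat), zeroc _⟩, mr One Nat⟩
                    ≈ mr One Nat).
  { apply (nat_ind_eq _ _ _ _ (msucc ∘ mr _ _)); unfold pred_step; simp_pr; reflexivity. }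
  plug counter ⟨mbang C, t⟩.
  unfold mpred, pred_step. simp_pr. exact Hq.
Qed.

(* Point-free form, for occurrences of pred ∘ s with nothing composed after it. *)
Lemma pred_succ_map : mpred ∘ msucc ≈ mid Nat.
Proof. rewrite <- (eq_idr _ _ msucc), pred_succ. reflexivity. Qed.
#[global] Hint Rewrite pred_zero pred_succ pred_succ_map : pr.

Lemma sub_zero C (x : Map C Nat) : x ∸ zeroc C ≈ x.
Proof. apply iter_zero. Qed.

(* Not in the base [pr]: it would preempt [sub_succ_succ] below. *)
Lemma sub_succ C (x n : Map C Nat) : x ∸ (msucc ∘ n) ≈ mpred ∘ (x ∸ n).
Proof. apply iter_succ. Qed.

Lemma add_zero C (x : Map C Nat) : madd ∘ ⟨x, zeroc C⟩ ≈ x.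
Proof. apply iter_zero. Qed.

Lemma add_succ C (x n : Map C Nat) : madd ∘ ⟨x, msucc ∘ n⟩ ≈ msucc ∘ madd ∘ ⟨x, n⟩.
Proof. apply iter_succ. Qed.
#[global] Hint Rewrite sub_zero add_zero add_succ : pr.

Lemma mul_zero C (x : Map C Nat) : mmul ∘ ⟨x, zeroc C⟩ ≈ zeroc C.
Proof. unfold mmul. simp_pr. reflexivity. Qed.

(* mul is the second component of the iterate of (x, acc) ↦ (x, acc + x), whose
   first component stays x. *)
Lemma mul_succ C (x n : Map C Nat) : mmul ∘ ⟨x, msucc ∘ n⟩ ≈ madd ∘ ⟨mmul ∘ ⟨x, n⟩, x⟩.
Proof.
  assert (constant : ml Nat Nat ∘ miter mul_step ∘ ⟨⟨ml Nat Nat, zeroc _⟩, mr Nat Nat⟩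
                     ≈ ml Nat Nat).
  { apply (nat_ind_eq _ _ _ _ (mr _ _)); unfold mul_step; simp_pr; reflexivity. }
  plug constant ⟨x, n⟩.
  unfold mmul, mul_step. simp_pr. rewrite Hq. reflexivity.
Qed.

Lemma not_zero C : mnot ∘ zeroc C ≈ onec C.
Proof. unfold mnot, one. simp_pr. reflexivity. Qed.

Lemma not_succ C (t : Map C Nat) : mnot ∘ msucc ∘ t ≈ zeroc C.
Proof. unfold mnot, one. simp_pr. reflexivity. Qed.

#[global] Hint Rewrite mul_zero mul_succ not_zero not_succ : pr.

(* Each law is proved for the generic element (a projection) by [nat_ind_eq] and
   then specialized to arbitrary terms with [plug]. *)

Lemma sub_succ_succ C (a b : Map C Nat) : (msucc ∘ a) ∸ (msucc ∘ b) ≈ a ∸ b.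
Proof.
  assert (generic : (msucc ∘ ml Nat Nat) ∸ (msucc ∘ mr Nat Nat) ≈ ml Nat Nat ∸ mr Nat Nat).
  { apply (nat_ind_eq _ _ _ _ (mpred ∘ mr _ _)); simp_pr; rewrite ?sub_succ; simp_pr; reflexivity. }
  plug generic ⟨a, b⟩. exact Hq.
Qed.
#[global] Hint Rewrite sub_succ_succ : pr.

Lemma zero_sub C (y : Map C Nat) : zeroc C ∸ y ≈ zeroc C.
Proof.
  assert (generic : zeroc (Prod One Nat) ∸ mr One Nat ≈ zeroc _).
  { apply (nat_ind_eq _ _ _ _ (mpred ∘ mr _ _)); simp_pr; rewrite ?sub_succ; simp_pr; reflexivity. }
  plug generic ⟨mbang C, y⟩. exact Hq.
Qed.

Lemma sub_diag C (y : Map C Nat) : y ∸ y ≈ zeroc C.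
Proof.
  assert (generic : mr One Nat ∸ mr One Nat ≈ zeroc _).
  { apply (nat_ind_eq _ _ _ _ (mr _ _)); simp_pr; reflexivity. }
  plug generic ⟨mbang C, y⟩. exact Hq.
Qed.

Lemma zero_add C (y : Map C Nat) : madd ∘ ⟨zeroc C, y⟩ ≈ y.
Proof.
  assert (generic : madd ∘ ⟨zeroc (Prod One Nat), mr One Nat⟩ ≈ mr One Nat).
  { apply (nat_ind_eq _ _ _ _ (msucc ∘ mr _ _)); simp_pr; reflexivity. }
  plug generic ⟨mbang C, y⟩. exact Hq.
Qed.
#[global] Hint Rewrite zero_sub sub_diag zero_add : pr.

Lemma zero_mul C (y : Map C Nat) : mmul ∘ ⟨zeroc C, y⟩ ≈ zeroc C.
Proof.
  assert (generic : mmul ∘ ⟨zeroc (Prod One Nat), mr One Nat⟩ ≈ zeroc _).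
  { apply (nat_ind_eq _ _ _ _ (mr _ _)); simp_pr; reflexivity. }
  plug generic ⟨mbang C, y⟩. exact Hq.
Qed.

Lemma one_mul C (y : Map C Nat) : mmul ∘ ⟨onec C, y⟩ ≈ y.
Proof.
  assert (generic : mmul ∘ ⟨onec (Prod One Nat), mr One Nat⟩ ≈ mr One Nat).
  { apply (nat_ind_eq _ _ _ _ (msucc ∘ mr _ _)); simp_pr; reflexivity. }
  plug generic ⟨mbang C, y⟩. exact Hq.
Qed.

Lemma mul_one C (x : Map C Nat) : mmul ∘ ⟨x, onec C⟩ ≈ x.
Proof. simp_pr. reflexivity. Qed.
#[global] Hint Rewrite zero_mul one_mul : pr.

(** * Truth values *)

Lemma sign_zero C : msign ∘ zeroc C ≈ zeroc C.
Proof. unfold msign. simp_pr. reflexivity. Qed.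

Lemma sign_succ C (t : Map C Nat) : msign ∘ msucc ∘ t ≈ onec C.
Proof. unfold msign. simp_pr. reflexivity. Qed.
#[global] Hint Rewrite sign_zero sign_succ : pr.

Lemma sign_not C (t : Map C Nat) : msign ∘ mnot ∘ t ≈ mnot ∘ t.
Proof.
  apply (case_split _ _ _ _ t (msign ∘ mnot ∘ mr C Nat) (mnot ∘ mr C Nat)); simp_pr; reflexivity.
Qed.

Lemma sign_idem C (t : Map C Nat) : msign ∘ msign ∘ t ≈ msign ∘ t.
Proof. unfold msign at 2 3. rewrite !comp_assoc, sign_not. reflexivity. Qed.

(* sgn a · (sgn a ∧ z) = sgn a ∧ z: a true conjunction forces its first conjunct. *)
Lemma sign_mul_absorb_l C (a z : Map C Nat) :
  mmul ∘ ⟨msign ∘ a, mand ∘ ⟨msign ∘ a, z⟩⟩ ≈ mand ∘ ⟨msign ∘ a, z⟩.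
Proof.
  unfold mand.
  apply (case_split _ _ _ _ a
    (mmul ∘ ⟨msign ∘ mr C Nat, msign ∘ mmul ∘ ⟨msign ∘ mr C Nat, z ∘ ml C Nat⟩⟩)
    (msign ∘ mmul ∘ ⟨msign ∘ mr C Nat, z ∘ ml C Nat⟩)); simp_pr; reflexivity.
Qed.

Lemma sign_mul_absorb_r C (b z : Map C Nat) :
  mmul ∘ ⟨msign ∘ b, mand ∘ ⟨z, msign ∘ b⟩⟩ ≈ mand ∘ ⟨z, msign ∘ b⟩.
Proof.
  unfold mand.
  apply (case_split _ _ _ _ b
    (mmul ∘ ⟨msign ∘ mr C Nat, msign ∘ mmul ∘ ⟨z ∘ ml C Nat, msign ∘ mr C Nat⟩⟩)
    (msign ∘ mmul ∘ ⟨z ∘ ml C Nat, msign ∘ mr C Nat⟩)); simp_pr; reflexivity.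
Qed.

Lemma and_true C (a b : Map C Nat) :
  mand ∘ ⟨msign ∘ a, msign ∘ b⟩ ≈ onec C -> msign ∘ a ≈ onec C /\ msign ∘ b ≈ onec C.
Proof.
  intros H. split.
  - rewrite <- (mul_one C (msign ∘ a)), <- H at 1. rewrite sign_mul_absorb_l. exact H.
  - rewrite <- (mul_one C (msign ∘ b)), <- H at 1. rewrite sign_mul_absorb_r. exact H.
Qed.

(* d · ¬d = 0, so ¬d = 1 forces d = 0. *)
Lemma mul_not_self C (d : Map C Nat) : mmul ∘ ⟨d, mnot ∘ d⟩ ≈ zeroc C.
Proof.
  apply (case_split _ _ _ _ d (mmul ∘ ⟨mr C Nat, mnot ∘ mr C Nat⟩) (zeroc _)); simp_pr; reflexivity.
Qed.

Lemma not_true_zero C (d : Map C Nat) : mnot ∘ d ≈ onec C -> d ≈ zeroc C.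
Proof. intros H. rewrite <- (mul_not_self C d), H, mul_one. reflexivity. Qed.

(** * Double induction *)

(* Fix F, a reference map F1 with the same values on both axes, and a map G
   computing F on the diagonal from its previous value.  The staircase of F is
   (x, y, n) ↦ F(x ∸ (y ∸ n), y ∸ (y ∸ n)): at n = 0 it is the boundary value
   F(x ∸ y, 0), and for n = y it is F(x, y).  Its step from n to s n is computed
   by [stair_step] from the previous value alone, using only F1 and G, so by
   [nat_ind_eq] all such F have the same staircase. *)
Section Staircase.

Variable B : Obj.
Variables (F1 F : Map (Prod Nat Nat) B).
Variable G : Map (Prod (Prod Nat Nat) B) B.

Hypothesis F_zero_left : forall C (w : Map C Nat), F ∘ ⟨zeroc C, w⟩ ≈ F1 ∘ ⟨zeroc C, w⟩.
Hypothesis F_zero_right : forall C (w : Map C Nat), F ∘ ⟨w, zeroc C⟩ ≈ F1 ∘ ⟨w, zeroc C⟩.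
Hypothesis F_succ_succ : forall C (a b : Map C Nat),
  F ∘ ⟨msucc ∘ a, msucc ∘ b⟩ ≈ G ∘ ⟨⟨a, b⟩, F ∘ ⟨a, b⟩⟩.

(* Contexts: Γ holds ((x, y), n); Γv adds the previous value v; Γk adds k with
   y ∸ n = s k; Γa adds a with x ∸ k = s a; px, py, pn project x, y, n out of Γ. *)
Local Notation Γ := (Prod (Prod Nat Nat) Nat).
Local Notation Γv := (Prod Γ B).
Local Notation Γk := (Prod Γv Nat).
Local Notation Γa := (Prod Γk Nat).
Local Notation px := (ml Nat Nat ∘ ml (Prod Nat Nat) Nat).
Local Notation py := (mr Nat Nat ∘ ml (Prod Nat Nat) Nat).
Local Notation pn := (mr (Prod Nat Nat) Nat).

(* Cases on y ∸ k: if 0 (which does not occur) the boundary value F1(s a, 0);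
   if s b, the diagonal step G((a, b), v). *)
Definition inner_table : Map (Prod Γa Nat) B :=
  caseN (F1 ∘ ⟨msucc ∘ mr Γk Nat, zeroc Γa⟩)
        (G ∘ ⟨⟨mr Γk Nat ∘ ml Γa Nat, mr Γa Nat⟩, mr Γ B ∘ ml Γv Nat ∘ ml Γk Nat ∘ ml Γa Nat⟩).
Definition stair_inner : Map Γa B :=
  inner_table ∘ ⟨mid Γa, (py ∘ ml Γ B ∘ ml Γv Nat ∘ ml Γk Nat) ∸ (mr Γv Nat ∘ ml Γk Nat)⟩.

(* Cases on x ∸ k: if 0 the boundary value F1(0, y ∸ k); otherwise [stair_inner]. *)
Definition middle_table : Map (Prod Γk Nat) B :=
  caseN (F1 ∘ ⟨zeroc Γk, (py ∘ ml Γ B ∘ ml Γv Nat) ∸ mr Γv Nat⟩) stair_inner.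
Definition stair_middle : Map Γk B :=
  middle_table ∘ ⟨mid Γk, (px ∘ ml Γ B ∘ ml Γv Nat) ∸ mr Γv Nat⟩.

(* Cases on y ∸ n: if 0 the staircase has reached (x, y) and stays at v;
   otherwise [stair_middle]. *)
Definition step_table : Map (Prod Γv Nat) B := caseN (mr Γ B) stair_middle.
Definition stair_step : Map Γv B := step_table ∘ ⟨mid Γv, (py ∘ ml Γ B) ∸ (pn ∘ ml Γ B)⟩.

Definition staircase : Map Γ B := F ∘ ⟨px ∸ (py ∸ pn), py ∸ (py ∸ pn)⟩.

Lemma stair_inner_spec C (x y n k a : Map C Nat) :
  stair_inner ∘ ⟨⟨⟨⟨⟨x, y⟩, n⟩, F ∘ ⟨a, mpred ∘ (y ∸ k)⟩⟩, k⟩, a⟩ ≈ F ∘ ⟨msucc ∘ a, y ∸ k⟩.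
Proof.
  unfold stair_inner.
  apply (case_split _ _ _ _ (y ∸ k)
    (inner_table ∘ ⟨⟨⟨⟨⟨⟨x ∘ ml C Nat, y ∘ ml C Nat⟩, n ∘ ml C Nat⟩,
                      F ∘ ⟨a ∘ ml C Nat, mpred ∘ mr C Nat⟩⟩, k ∘ ml C Nat⟩, a ∘ ml C Nat⟩,
                    mr C Nat⟩)
    (F ∘ ⟨msucc ∘ a ∘ ml C Nat, mr C Nat⟩)); unfold inner_table; simp_pr; try reflexivity.
  - rewrite F_zero_right. reflexivity.
  - rewrite F_succ_succ. reflexivity.
Qed.

Lemma stair_middle_spec C (x y n k : Map C Nat) :
  stair_middle ∘ ⟨⟨⟨⟨x, y⟩, n⟩, F ∘ ⟨mpred ∘ (x ∸ k), mpred ∘ (y ∸ k)⟩⟩, k⟩ ≈ F ∘ ⟨x ∸ k, y ∸ k⟩.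
Proof.
  unfold stair_middle.
  apply (case_split _ _ _ _ (x ∸ k)
    (middle_table ∘ ⟨⟨⟨⟨⟨x ∘ ml C Nat, y ∘ ml C Nat⟩, n ∘ ml C Nat⟩,
                    F ∘ ⟨mpred ∘ mr C Nat, mpred ∘ (y ∘ ml C Nat ∸ k ∘ ml C Nat)⟩⟩, k ∘ ml C Nat⟩,
                  mr C Nat⟩)
    (F ∘ ⟨mr C Nat, y ∘ ml C Nat ∸ k ∘ ml C Nat⟩)); unfold middle_table; simp_pr; try reflexivity.
  - rewrite F_zero_left. reflexivity.
  - rewrite stair_inner_spec. reflexivity.
Qed.

Lemma stair_step_spec C (x y n : Map C Nat) :
  stair_step ∘ ⟨⟨⟨x, y⟩, n⟩, F ∘ ⟨x ∸ (y ∸ n), y ∸ (y ∸ n)⟩⟩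
  ≈ F ∘ ⟨x ∸ (mpred ∘ (y ∸ n)), y ∸ (mpred ∘ (y ∸ n))⟩.
Proof.
  unfold stair_step.
  apply (case_split _ _ _ _ (y ∸ n)
    (step_table ∘ ⟨⟨⟨⟨x ∘ ml C Nat, y ∘ ml C Nat⟩, n ∘ ml C Nat⟩,
                     F ∘ ⟨x ∘ ml C Nat ∸ mr C Nat, y ∘ ml C Nat ∸ mr C Nat⟩⟩, mr C Nat⟩)
    (F ∘ ⟨x ∘ ml C Nat ∸ (mpred ∘ mr C Nat), y ∘ ml C Nat ∸ (mpred ∘ mr C Nat)⟩));
    unfold step_table; simp_pr; try reflexivity.
  rewrite !sub_succ, stair_middle_spec. reflexivity.
Qed.

Lemma staircase_succ : staircase ∘ atS _ ≈ stair_step ∘ ⟨mid _, staircase⟩.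
Proof.
  unfold staircase. rewrite pair_proj3. simp_pr. rewrite stair_step_spec, !sub_succ. reflexivity.
Qed.

End Staircase.

Lemma double_ind_eq B (F1 F2 : Map (Prod Nat Nat) B) (G : Map (Prod (Prod Nat Nat) B) B) :
  F1 ∘ ⟨zeroc Nat, mid Nat⟩ ≈ F2 ∘ ⟨zeroc Nat, mid Nat⟩ ->
  F1 ∘ ⟨mid Nat, zeroc Nat⟩ ≈ F2 ∘ ⟨mid Nat, zeroc Nat⟩ ->
  F1 ∘ ⟨msucc ∘ ml Nat Nat, msucc ∘ mr Nat Nat⟩ ≈ G ∘ ⟨mid _, F1⟩ ->
  F2 ∘ ⟨msucc ∘ ml Nat Nat, msucc ∘ mr Nat Nat⟩ ≈ G ∘ ⟨mid _, F2⟩ -> F1 ≈ F2.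
Proof.
  intros H_left H_right H_step1 H_step2.
  assert (zero_left : forall C (w : Map C Nat), F2 ∘ ⟨zeroc C, w⟩ ≈ F1 ∘ ⟨zeroc C, w⟩).
  { intros C w. plug H_left w. symmetry. exact Hq. }
  assert (zero_right : forall C (w : Map C Nat), F2 ∘ ⟨w, zeroc C⟩ ≈ F1 ∘ ⟨w, zeroc C⟩).
  { intros C w. plug H_right w. symmetry. exact Hq. }
  assert (succ_succ : forall F, F ∘ ⟨msucc ∘ ml Nat Nat, msucc ∘ mr Nat Nat⟩ ≈ G ∘ ⟨mid _, F⟩ ->
            forall C (a b : Map C Nat), F ∘ ⟨msucc ∘ a, msucc ∘ b⟩ ≈ G ∘ ⟨⟨a, b⟩, F ∘ ⟨a, b⟩⟩).
  { intros F HF C a b. plug HF ⟨a, b⟩. exact Hq. }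
  assert (same_staircase : staircase B F1 ≈ staircase B F2).
  { apply (nat_ind_eq _ _ _ _ (stair_step B F1 G)).
    - unfold staircase. simp_pr. rewrite zero_right. reflexivity.
    - apply staircase_succ; [intros; reflexivity | intros; reflexivity | exact (succ_succ _ H_step1)].
    - apply staircase_succ; [exact zero_left | exact zero_right | exact (succ_succ _ H_step2)]. }
  transitivity (staircase B F1 ∘ ⟨mid _, mr Nat Nat⟩).
  { unfold staircase. simp_pr. reflexivity. }
  rewrite same_staircase. unfold staircase. simp_pr. reflexivity.
Qed.

(** * Equality on N and the equality predicates *)

(* max(x, y) computed in two ways: (x ∸ y) + y = (y ∸ x) + x. *)
Lemma max_sym C (x y : Map C Nat) : madd ∘ ⟨x ∸ y, y⟩ ≈ madd ∘ ⟨y ∸ x, x⟩.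
Proof.
  assert (generic : madd ∘ ⟨ml Nat Nat ∸ mr Nat Nat, mr Nat Nat⟩
                  ≈ madd ∘ ⟨mr Nat Nat ∸ ml Nat Nat, ml Nat Nat⟩).
  { apply (double_ind_eq _ _ _ (msucc ∘ mr _ _)); simp_pr; reflexivity. }
  plug generic ⟨x, y⟩. exact Hq.
Qed.

(* Antisymmetry: u ∸ v = 0 and v ∸ u = 0 give u = 0 + v = 0 + u = v by [max_sym]. *)
Lemma nat_eq_of_sub_zero C (u v : Map C Nat) : u ∸ v ≈ zeroc C -> v ∸ u ≈ zeroc C -> u ≈ v.
Proof.
  intros Huv Hvu. pose proof (max_sym C u v) as max_uv.
  rewrite Huv, Hvu, !zero_add in max_uv. symmetry. exact max_uv.
Qed.

Lemma meq_sign X C (h : Map C (Prod X X)) : meq X ∘ h ≈ msign ∘ meq X ∘ h.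
Proof.
  destruct X; cbn [meq]; unfold meqN, mand; simp_pr; rewrite ?sign_idem; reflexivity.
Qed.

Lemma meq_true_eq X : forall C (u v : Map C X), meq X ∘ ⟨u, v⟩ ≈ onec C -> u ≈ v.
Proof.
  induction X as [| |X IHX Y IHY]; intros C u v H.
  - rewrite (eq_term _ u), (eq_term _ v). reflexivity.
  - cbn [meq] in H. unfold meqN, mleq in H. simp_pr_in H.
    rewrite <- (sign_not _ (u ∸ v)), <- (sign_not _ (v ∸ u)) in H.
    apply and_true in H. destruct H as [Huv Hvu].
    rewrite sign_not in Huv, Hvu.
    apply nat_eq_of_sub_zero; apply not_true_zero; assumption.
  - cbn [meq] in H. simp_pr_in H. rewrite (meq_sign X), (meq_sign Y) in H.
    apply and_true in H. destruct H as [HX HY].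
    rewrite <- (meq_sign X) in HX. rewrite <- (meq_sign Y) in HY.
    apply IHX in HX. apply IHY in HY.
    rewrite <- (eq_surj _ _ _ u), <- (eq_surj _ _ _ v), HX, HY. reflexivity.
Qed.

Theorem mainTheorem2 (A B : Obj) (f g : Map A B) :
  PREq (true_ A) (mcomp (meq B) (mcomp (mtimes f g) (mdiag A))) ->
  PREq f g.
Proof.
  intros H. apply (meq_true_eq B A). simp_pr_in H. symmetry. exact H.
Qed.
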